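(* Let $n \geq 1$, $N := 2^n$, and let $\ket{\psi} \in \mathbb{C}^N$ be any $n$-qubit (unit-norm) state. Then there exists a subset $S \subseteq [N]$ such that $|\langle S | \psi\rangle| \geq \dfrac{1}{8\sqrt{n+3}}$.
   Context: The computational basis of $n$ qubits is indexed by $[N] = \{1,\dots,N\}$, $N = 2^n$, written $\ket{1},\dots,\ket{N}$. For a nonempty subset $S \subseteq [N]$, the subset state is $\ket{S} := \frac{1}{\sqrt{|S|}} \sum_{i \in S} \ket{i}$. *)

From mathcomp Require Import all_boot all_algebra.
From mathcomp Require Import reals complex.
Import GRing.Theory Num.Theory.
Set Implicit Arguments. Unset Strict Implicit. Unset Printing Implicit Defensive.
Local Open Scope ring_scope.
Local Open Scope complex_scope.

(* A vector of C^N, N = #|I|, in the computational basis indexed by I. *)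
Definition ket (R : realType) (I : finType) := I -> R[i].

Definition subset_state (R : realType) (I : finType) (S : {set I}) : ket R I :=
  fun i => if i \in S then ((Num.sqrt (#|S|%:R : R))^-1)%:C else 0.

Definition braket (R : realType) (I : finType) (phi psi : ket R I) : R[i] :=
  \sum_i (phi i)^* * psi i.

Definition unit_ket (R : realType) (I : finType) (psi : ket R I) : Prop :=
  \sum_i `|psi i| ^+ 2 = 1.

(* For each amplitude, the positive parts of Re(psi_i i^k), k < 4, have squares
   summing to |psi_i|^2, so for some fixed direction k the nonnegative vector
   x_i = max(Re(psi_i i^k), 0) has squared mass at least 1/4.  The dyadic
   layer-cake bound x^2 <= 4 sum_(j<J) [x >= 2^-(j+1)] 4^-(j+1) + 4^-J, taken
   with J = n + 3, then yields a level t = 2^-(j+1) whose superlevel set S has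
   t^2 |S| >= 1/(64 (n + 3)).  On S every Re(psi_i i^k) is at least t, so
   |<S|psi>| >= Re(i^k sum_(i in S) psi_i) / sqrt |S| >= t sqrt |S|. *)

From mathcomp Require Import all_boot all_order all_algebra.
From mathcomp Require Import reals complex ring lra.
Import Order.TTheory GRing.Theory Num.Theory.
Set Implicit Arguments. Unset Strict Implicit. Unset Printing Implicit Defensive.
Local Open Scope ring_scope.

Lemma exists_ge_mean (R : realFieldType) (I : finType) (F : I -> R) :
  (0 < #|I|)%N -> exists i, \sum_j F j <= #|I|%:R * F i.
Proof.
move=> I_gt0; apply/existsP; apply: contraT; rewrite negb_exists => /forallP small.
have : \sum_j #|I|%:R * F j < \sum_(j : I) \sum_k F k.
  apply: ltr_sum => [|j _]; last by rewrite ltNge small.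
  by case/card_gt0P: I_gt0 => i0 _; apply/hasP; exists i0; rewrite ?mem_index_enum.
by rewrite -mulr_sumr sumr_const mulr_natl ltxx.
Qed.

Lemma sqr_max0_add_sqr_max0_opp (R : realDomainType) (a : R) :
  Num.max a 0 ^+ 2 + Num.max (- a) 0 ^+ 2 = a ^+ 2.
Proof.
have [a_ge0 | a_lt0] := leP 0 a.
  by rewrite max_r ?oppr_le0 // expr0n addr0.
by rewrite max_l ?oppr_ge0 ?ltW // expr0n add0r sqrrN.
Qed.

Section DyadicLayers.
Variable R : realFieldType.

Local Notation halfpow k := ((2 : R)^-1 ^+ k).

Lemma halfpowS k : halfpow k.+1 = halfpow k / 2.
Proof. by rewrite exprSr. Qed.

Lemma halfpow_gt0 k : 0 < halfpow k.
Proof. by rewrite exprn_gt0 // invr_gt0 ltr0n. Qed.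

Lemma sqr_le_dyadic_sum (x : R) (J : nat) : 0 <= x <= 1 ->
  x ^+ 2 <= 4 * \sum_(j < J) (if halfpow j.+1 <= x then halfpow j.+1 ^+ 2 else 0)
            + halfpow J ^+ 2.
Proof.
case/andP=> x_ge0 x_le1; elim: J => [|J IHJ].
  by rewrite big_ord0 mulr0 add0r expr0 expr1n; nra.
rewrite big_ord_recr /= !(halfpowS J).
have := halfpow_gt0 J.
have : 0 <= \sum_(j < J) (if halfpow j.+1 <= x then halfpow j.+1 ^+ 2 else 0).
  by apply: sumr_ge0 => j _; case: ifP => // _; exact: sqr_ge0.
case: ifP => [|/negbT]; last rewrite -ltNge; nra.
Qed.

Definition superlevel (I : finType) (x : I -> R) (t : R) := [set i | t <= x i].

Lemma sum_sqr_le_dyadic_layers (I : finType) (x : I -> R) (J : nat) :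
  (forall i, 0 <= x i <= 1) ->
  \sum_i x i ^+ 2 <=
    4 * \sum_(j < J) halfpow j.+1 ^+ 2 * #|superlevel x (halfpow j.+1)|%:R
    + #|I|%:R * halfpow J ^+ 2.
Proof.
move=> x01; apply: le_trans (ler_sum _ (fun i _ => sqr_le_dyadic_sum J (x01 i))) _.
rewrite big_split /= -mulr_sumr exchange_big /= sumr_const.
apply: lerD; last by rewrite mulr_natl.
rewrite ler_pM2l // ler_sum // => j _.
by rewrite -big_mkcond /= sumr_const mulr_natr cardsE.
Qed.

Lemma exists_heavy_dyadic_layer (I : finType) (x : I -> R) (J : nat) (c : R) :
  (forall i, 0 <= x i <= 1) ->
  4 * (J%:R * c) + #|I|%:R * halfpow J ^+ 2 < \sum_i x i ^+ 2 ->
  exists j : 'I_J, c < halfpow j.+1 ^+ 2 * #|superlevel x (halfpow j.+1)|%:R.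
Proof.
move=> x01 heavy; apply/existsP; apply: contraLR heavy; rewrite negb_exists -leNgt.
move=> /forallP light; apply: le_trans (sum_sqr_le_dyadic_layers J x01) _.
have -> : J%:R * c = \sum_(j < J) c by rewrite sumr_const card_ord mulr_natl.
by rewrite lerD2r ler_pM2l // ler_sum // => j _; rewrite leNgt light.
Qed.

Lemma halfpow_le1 k : halfpow k <= 1.
Proof. by rewrite exprn_ile1 ?invr_ge0 ?invf_le1 ?ler0n ?ler1n. Qed.

Lemma natr_pow2_mul_sqr_halfpow (m : nat) : (2 ^ m)%:R * halfpow (m + 3) ^+ 2 <= 64^-1.
Proof.
rewrite expr2 exprD !mulrA natrX -exprMn mulfV ?pnatr_eq0 // expr1n mul1r.
have := halfpow_le1 m; lra.
Qed.

End DyadicLayers.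

Lemma exists_large_dyadic_superlevel (R : rcfType) (m : nat) (x : 'I_(2 ^ m) -> R) :
  (forall i, 0 <= x i <= 1) -> 4^-1 <= \sum_i x i ^+ 2 ->
  exists j : 'I_(m + 3), (8 * Num.sqrt (m + 3)%:R)^-1 <=
    2^-1 ^+ j.+1 * Num.sqrt (#|superlevel x (2^-1 ^+ j.+1)|%:R : R).
Proof.
move=> x01 mass; set c := (8 * Num.sqrt (m + 3)%:R)^-1.
have c_ge0 : 0 <= c by rewrite invr_ge0 mulr_ge0 ?sqrtr_ge0.
have [|j heavy] := exists_heavy_dyadic_layer (J := m + 3) (c := c ^+ 2) x01.
  have mc : (m + 3)%:R * c ^+ 2 = 64^-1.
    by rewrite exprVn exprMn sqr_sqrtr ?ler0n //; field; rewrite -natrD pnatr_eq0 addn3.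
  by rewrite mc cardE size_enum_ord; have := @natr_pow2_mul_sqr_halfpow R m; lra.
exists j; rewrite -(ler_pXn2r (_ : 0 < 2)%N) ?nnegrE ?mulr_ge0 ?sqrtr_ge0 //.
  by rewrite exprMn sqr_sqrtr ?ler0n // ltW.
by rewrite ltW ?halfpow_gt0.
Qed.

Local Open Scope complex_scope.

Section ComplexProjections.
Variable R : realType.

Lemma Re_le_norm (z : R[i]) : (complex.Re z)%:C <= `|z|.
Proof.
rewrite normc_def lecR; apply: le_trans (ler_norm _) _.
by rewrite -sqrtr_sqr ler_wsqrtr // lerDl sqr_ge0.
Qed.

Lemma Re_sum (I : finType) (S : {set I}) (f : I -> R[i]) :
  complex.Re (\sum_(i in S) f i) = \sum_(i in S) complex.Re (f i).
(* The additive structure of Re is declared on the alias Rcomplex R. *)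
Proof. exact: (raddf_sum (@complex.Re R : Rcomplex R -> R)). Qed.

Lemma sum_sqr_max0_Re_rotations (z : R[i]) :
  \sum_(k < 4) Num.max (complex.Re (z * 'i ^+ k)) 0 ^+ 2 =
    complex.Re z ^+ 2 + complex.Im z ^+ 2.
Proof.
case: z => a b; rewrite !big_ord_recr big_ord0 /=.
rewrite !(mul0r, mulr0, mul1r, mulr1, subr0, sub0r, add0r, addr0, mulrN, opprK).
by rewrite -(sqr_max0_add_sqr_max0_opp a) -(sqr_max0_add_sqr_max0_opp b); ring.
Qed.

Lemma braket_subset_state (I : finType) (S : {set I}) (psi : ket R I) :
  braket (subset_state R S) psi = ((Num.sqrt #|S|%:R)^-1)%:C * \sum_(i in S) psi i.
Proof.
rewrite /braket /subset_state mulr_sumr [RHS]big_mkcond /=.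
apply: eq_bigr => i _; case: ifP => _; last by rewrite conjC0 mul0r.
by rewrite conj_Creal // complex_real.
Qed.

Lemma braket_subset_state_ge (I : finType) (psi : ket R I) (S : {set I})
    (u : R[i]) (t : R) :
  `|u| = 1 -> (forall i, i \in S -> t <= complex.Re (psi i * u)) ->
  (t * Num.sqrt #|S|%:R)%:C <= `|braket (subset_state R S) psi|.
Proof.
move=> u_norm1 t_le; rewrite braket_subset_state normrM ger0_norm; last first.
  by rewrite ler0c invr_ge0 sqrtr_ge0.
set k : R := #|S|%:R; set s := Num.sqrt k.
have k_ge0 : 0 <= k by rewrite ler0n.
have tk_le : t * k <= complex.Re (\sum_(i in S) psi i * u).
  by rewrite Re_sum /k mulr_natr -sumr_const ler_sum.
have [s0 | s_neq0] := eqVneq s 0.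
  by rewrite s0 mulr0 invr0 mul0r.
have -> : t * s = s^-1 * (t * k) by rewrite -(sqr_sqrtr k_ge0) -/s; field.
rewrite rmorphM ler_wpM2l ?ler0c ?invr_ge0 ?sqrtr_ge0 //.
rewrite -[`|_|]mulr1 -u_norm1 -normrM mulr_suml.
by apply: le_trans (Re_le_norm _); rewrite lecR.
Qed.

Lemma sqr_max0_Re_rotation_le (z : R[i]) (k : 'I_4) :
  Num.max (complex.Re (z * 'i ^+ k)) 0 ^+ 2 <= complex.Re z ^+ 2 + complex.Im z ^+ 2.
Proof.
rewrite -sum_sqr_max0_Re_rotations (bigD1 k) //= lerDl.
by apply: sumr_ge0 => *; exact: sqr_ge0.
Qed.

Lemma unit_ket_sum_Re_Im (I : finType) (psi : ket R I) : unit_ket psi ->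
  \sum_i (complex.Re (psi i) ^+ 2 + complex.Im (psi i) ^+ 2) = 1.
Proof.
move=> psi_unit; apply: (@complexI R); rewrite rmorph_sum rmorph1 -psi_unit.
by apply: eq_bigr => i _; exact: add_Re2_Im2.
Qed.

Lemma unit_ket_Re_Im_le1 (I : finType) (psi : ket R I) (i : I) : unit_ket psi ->
  complex.Re (psi i) ^+ 2 + complex.Im (psi i) ^+ 2 <= 1.
Proof.
move/unit_ket_sum_Re_Im <-; rewrite (bigD1 i) //= lerDl.
by apply: sumr_ge0 => *; rewrite addr_ge0 ?sqr_ge0.
Qed.

Lemma normr_iX (k : nat) : `|'i ^+ k| = 1 :> R[i].
Proof. by rewrite normrX normc_def /= expr0n expr1n add0r sqrtr1 expr1n. Qed.

End ComplexProjections.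

Theorem mainTheorem2 (R : realType) (n : nat) (hn : (1 <= n)%N)
    (psi : ket R 'I_(2 ^ n)) (hpsi : unit_ket psi) :
  exists S : {set 'I_(2 ^ n)},
    S != set0 /\
    ((8 * Num.sqrt ((n + 3)%:R : R))^-1)%:C <= `|braket (subset_state R S) psi|.
Proof.
pose x (k : 'I_4) i := Num.max (complex.Re (psi i * 'i ^+ k)) 0.
have total : \sum_(k < 4) \sum_i x k i ^+ 2 = 1.
  rewrite exchange_big -(unit_ket_sum_Re_Im hpsi).
  by apply: eq_bigr => i _; exact: sum_sqr_max0_Re_rotations.
have [|k] := exists_ge_mean (fun k => \sum_i x k i ^+ 2).
  by rewrite cardE size_enum_ord.
rewrite total cardE size_enum_ord => heavy.
have x01 i : 0 <= x k i <= 1.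
  have x_ge0 : 0 <= x k i by rewrite le_max lexx orbT.
  have x_sqr_le1 : x k i ^+ 2 <= 1.
    exact: le_trans (sqr_max0_Re_rotation_le _ k) (unit_ket_Re_Im_le1 i hpsi).
  by rewrite x_ge0 /=; nra.
have [|j bound] := exists_large_dyadic_superlevel x01; first lra.
exists (superlevel (x k) (2^-1 ^+ j.+1)); split.
  apply: contraTneq bound => ->; rewrite cards0 sqrtr0 mulr0 -ltNge.
  by rewrite invr_gt0 mulr_gt0 // sqrtr_gt0 ltr0n addn3.
apply: le_trans (braket_subset_state_ge (t := 2^-1 ^+ j.+1) (normr_iX R k) _).
  by rewrite lecR.
by move=> i; rewrite inE le_max [_ <= 0]leNgt halfpow_gt0 orbF.
Qed.
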